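(* Every Guvab $(G,u,v,\alpha,\beta)$ satisfies exactly one of the following four conditions: (1) $\lim_{k\to\infty}W_k=1$ and $\beta<1$; (2) $\lim_{k\to\infty}W_k=\frac12$ and $\beta<1$; (3) $\lim_{k\to\infty}W_k=0$ and $\beta<1$; (4) $\beta=1$.
   Context: A Guvab is a tuple $(G,u,v,\alpha,\beta)$ where $G$ is a finite, connected, simple graph, $u,v\in V(G)$, and $\alpha,\beta\in[0,1]$ with $\alpha\le\beta$. A random walk on $G$ with starting vertex $w$ and laziness $\gamma$ is the Markov chain $R_0=w$ and, for $i\ge1$, $R_i=R_{i-1}$ with probability $\gamma$ and $R_i=t$ with probability $\frac{1-\gamma}{\deg(R_{i-1})}$ for each neighbor $t$ of $R_{i-1}$. $\mu_k$ is the distribution after $k$ steps of the walk from $u$ with laziness $\alpha$, $\nu_k$ that of the walk from $v$ with laziness $\beta$, and $W_k=W(\mu_k,\nu_k)$ is the Wasserstein ($L^1$ optimal transport) distance with respect to the graph distance: the minimum over transportation plans (nonnegative $T$ on $V(G)\times V(G)$ with marginals $\mu_k,\nu_k$) of $\sum d(w_1,w_2)T(w_1,w_2)$. (Implicit in the statement: when $\beta<1$ the limit $\lim_k W_k$ exists.) *)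

From HB Require Import structures.
From mathcomp Require Import all_boot all_order all_algebra.
From mathcomp Require Import all_classical all_reals all_analysis.
Set Implicit Arguments. Unset Strict Implicit. Unset Printing Implicit Defensive.
Import Order.TTheory GRing.Theory Num.Theory.
Local Open Scope ring_scope.
Local Open Scope classical_set_scope.

(* A finite simple graph is a finType T with a symmetric irreflexive
   edge relation e : rel T. *)

Definition nbrs (T : finType) (e : rel T) (x : T) : {set T} := [set y | e x y].
Definition deg (T : finType) (e : rel T) (x : T) : nat := #|nbrs e x|.

(* One-step transition probability of the walk with laziness g:
   stay with probability g, move to each neighbour with probability
   (1-g)/deg x.  (An isolated vertex -- only possible in the one-vertex
   connected graph -- keeps all its mass.) *)
Definition step_prob (R : realType) (T : finType) (e : rel T) (g : R) (x y : T) : R :=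
  if x == y then (if deg e x == 0%N then 1 else g)
  else if e x y then (1 - g) / (deg e x)%:R else 0.

Fixpoint walk_dist (R : realType) (T : finType) (e : rel T) (g : R) (w : T)
    (k : nat) : T -> R :=
  match k with
  | 0%N => fun y => (y == w)%:R
  | k'.+1 => fun y => \sum_(x : T) walk_dist e g w k' x * step_prob e g x y
  end.

Fixpoint ball (T : finType) (e : rel T) (n : nat) (x : T) : {set T} :=
  match n with
  | 0%N => [set x]
  | n'.+1 => ball e n' x :|: \bigcup_(z in ball e n' x) nbrs e z
  end.

(* Graph distance: least n with y in ball e n x (distances in a connected
   graph are < #|T|). *)
Definition gdist (T : finType) (e : rel T) (x y : T) : nat :=
  find (fun n => y \in ball e n x) (iota 0 #|T|).

Definition is_plan (R : realType) (T : finType) (mu nu : T -> R) (p : T -> T -> R) : Prop :=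
  [/\ forall a b, 0 <= p a b,
      forall a, \sum_(b : T) p a b = mu a &
      forall b, \sum_(a : T) p a b = nu b].

Definition plan_cost (R : realType) (T : finType) (e : rel T) (p : T -> T -> R) : R :=
  \sum_(a : T) \sum_(b : T) (gdist e a b)%:R * p a b.

Definition wasserstein (R : realType) (T : finType) (e : rel T) (mu nu : T -> R) : R :=
  inf [set c | exists p, is_plan mu nu p /\ c = plan_cost e p].

Definition Wk (R : realType) (T : finType) (e : rel T) (u v : T) (alpha beta : R)
    (k : nat) : R :=
  wasserstein e (walk_dist e alpha u k) (walk_dist e beta v k).

(* When the walk from a vertex is lazy, or G contains an odd cycle, some power
   of its transition kernel is entrywise positive, and a Doeblin contraction
   makes its distribution converge in L1 to the stationary distribution
   pi x = deg x / sum_y deg y. A non-lazy walk on a bipartite G instead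
   converges to the periodic profile 2 pi restricted to the side it occupies at
   time k. Since transport cost is stable under small L1 perturbations (of
   size at most #|T| times the perturbation), W_k converges to the cost between
   the limit profiles, read off from explicit plans and from the lower bound
   "mass of nu outside the support of mu": 0 between equal profiles, 1/2
   between a one-sided profile and pi, 1 between the two sides. Exclusivity
   is uniqueness of limits. *)

From HB Require Import structures.
From mathcomp Require Import all_boot all_order all_algebra.
From mathcomp Require Import all_classical all_reals all_analysis.
From mathcomp Require Import zify ring lra.
Import Order.TTheory GRing.Theory Num.Theory numFieldNormedType.Exports.
Local Open Scope classical_set_scope.
Local Open Scope ring_scope.
Set Implicit Arguments. Unset Strict Implicit. Unset Printing Implicit Defensive.

Section FiniteKernels.
Variables (R : realType) (T : finType).
Implicit Types (f : T -> R) (Q : T -> T -> R).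

Lemma sum_if_eq f a : \sum_x (if x == a then f x else 0) = f a.
Proof. by rewrite -big_mkcond big_pred1_eq. Qed.

Lemma ler_sum_term f a : (forall x, 0 <= f x) -> f a <= \sum_x f x.
Proof. by move=> f0; rewrite (bigD1 a) //= lerDl sumr_ge0. Qed.

Definition prob_dist f := (forall x, 0 <= f x) /\ \sum_x f x = 1.

Definition stochastic Q := forall x, prob_dist (Q x).

Definition zero_or_ge (d : R) f := forall x, f x = 0 \/ d <= f x.

Lemma l1_stochastic_contract Q f : stochastic Q ->
  \sum_y `|\sum_x f x * Q x y| <= \sum_x `|f x|.
Proof.
move=> Qs; have Q0 x y : 0 <= Q x y := (Qs x).1 y.
have Q1 x : \sum_y Q x y = 1 := (Qs x).2.
apply: (@le_trans _ _ (\sum_y \sum_x `|f x| * Q x y)).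
  apply: ler_sum => y _; apply: (le_trans (ler_norm_sum _ _ _)).
  by apply: ler_sum => x _; rewrite normrM (ger0_norm (Q0 _ _)).
by rewrite exchange_big /=; apply: ler_sum => x _; rewrite -mulr_sumr Q1 mulr1.
Qed.

(* Doeblin: every row indexed by C dominates the measure h = d/#|C| on C, of
   mass d; as f has mass zero, f Q = f (Q - h), and Q - h has row sums 1 - d. *)
Lemma l1_doeblin_contract Q (C : pred T) f d : stochastic Q ->
  (forall x y, C x -> C y -> d <= Q x y) ->
  (forall x, ~~ C x -> f x = 0) -> \sum_x f x = 0 ->
  \sum_y `|\sum_x f x * Q x y| <= (1 - d) * \sum_x `|f x|.
Proof.
move=> Qs Qd fC f0; have Q0 x y : 0 <= Q x y := (Qs x).1 y.
have Q1 x : \sum_y Q x y = 1 := (Qs x).2.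
have [x0 Cx0|C0] := pickP C; last first.
  have fz x : f x = 0 by rewrite fC ?C0.
  rewrite big1 => [|y _]; last by rewrite big1 ?normr0 // => x _; rewrite fz mul0r.
  by rewrite big1 ?mulr0 // => x _; rewrite fz normr0.
have C_gt0 : (0 < #|C|)%N by apply/card_gt0P; exists x0.
pose h y : R := if C y then d / #|C|%:R else 0.
have sum_h : \sum_y h y = d.
  rewrite -big_mkcond /= sumr_const -[_ *+ #|C|]mulr_natr divfK //.
  by rewrite pnatr_eq0 -lt0n.
have hQ x y : C x -> h y <= Q x y.
  move=> Cx; rewrite /h; case Cy: (C y); last exact: Q0.
  have [d0|d0] := lerP 0 d; last by rewrite (le_trans _ (Q0 x y)) // nmulr_rle0.
  apply: le_trans (Qd _ _ Cx Cy); rewrite ler_pdivrMr ?ltr0n //.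
  by rewrite ler_peMr // ler1n.
have shift y : \sum_x f x * Q x y = \sum_x f x * (Q x y - h y).
  by under [RHS]eq_bigr do rewrite mulrBr; rewrite sumrB -mulr_suml f0 mul0r subr0.
apply: (@le_trans _ _ (\sum_y \sum_x `|f x| * (Q x y - h y))).
  apply: ler_sum => y _; rewrite shift; apply: (le_trans (ler_norm_sum _ _ _)).
  apply: ler_sum => x _; rewrite normrM; have [Cx|nCx] := boolP (C x).
    by rewrite (ger0_norm (x := Q x y - _)) // subr_ge0 hQ.
  by rewrite fC // normr0 !mul0r.
rewrite exchange_big /= mulr_sumr; apply: ler_sum => x _.
by rewrite -mulr_sumr sumrB Q1 sum_h mulrC.
Qed.

Lemma exists_expr_mul_le (r c eps : R) : 0 <= r < 1 -> 0 <= c -> 0 < eps ->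
  exists j : nat, r ^+ j * c <= eps.
Proof.
move=> /andP[r0 r1] c0 e0.
have e'0 : 0 < eps / (c + 1) by rewrite divr_gt0 // ltr_wpDl.
have r1' : `|r| < 1 by rewrite ger0_norm.
have [j _ Hj] := cvgr0_norm_le _ (cvg_expr r1') _ e'0.
exists j; have := Hj j (leqnn j); rewrite /= ger0_norm ?exprn_ge0 // => hj.
apply: (le_trans (ler_wpM2r c0 hj)).
rewrite mulrAC ler_pdivrMr ?ltr_wpDl //.
by apply: ler_wpM2l; [exact: ltW | rewrite lerDl].
Qed.

Lemma finite_pos_lower_bound (I : finType) (P : pred I) (F : I -> R) :
  (forall i, P i -> 0 < F i) -> exists2 d : R, 0 < d <= 1 & forall i, P i -> d <= F i.
Proof.
move=> F0; exists (\big[Order.min/1]_(i | P i) F i); last by move=> i; apply: bigmin_le_cond.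
by rewrite bigmin_le_id andbT; apply/bigmin_gtP; split=> //; exact: F0.
Qed.

End FiniteKernels.

Section WalkKernel.
Variables (R : realType) (T : finType) (e : rel T).
Hypothesis e_irr : irreflexive e.
Implicit Types (g : R) (w x y : T).

Lemma step_prob_ge0 g x y : 0 <= g <= 1 -> 0 <= step_prob e g x y.
Proof.
case/andP=> g0 g1; rewrite /step_prob; case: (x == y); first by case: ifP.
by case: (e x y) => //; rewrite divr_ge0 ?subr_ge0.
Qed.

Lemma sum_step_prob g x : \sum_y step_prob e g x y = 1.
Proof.
rewrite (bigD1 x) //= /step_prob eqxx.
rewrite (eq_bigr (fun y => if y \in nbrs e x then (1 - g) / (deg e x)%:R else 0)).
  rewrite -big_mkcondr /= (eq_bigl (mem (nbrs e x))); last first.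
    by move=> y; rewrite andb_idl // inE => exy; apply/eqP => yx; rewrite yx e_irr in exy.
  rewrite sumr_const -/(deg e x); have [->|d0] := eqVneq (deg e x) 0%N.
    by rewrite mulr0n addr0.
  by rewrite -[_ *+ _]mulr_natr divfK ?pnatr_eq0 // addrC subrK.
by move=> y; rewrite inE eq_sym => /negPf ->.
Qed.

Lemma step_prob_stochastic g : 0 <= g <= 1 -> stochastic (step_prob e g).
Proof. by move=> g01 x; split=> [y|]; [exact: step_prob_ge0 | exact: sum_step_prob]. Qed.

Lemma walk_dist_ge0 g w k y : 0 <= g <= 1 -> 0 <= walk_dist e g w k y.
Proof.
move=> g01; elim: k y => [|k IH] y /=; first by rewrite ler0n.
by apply: sumr_ge0 => x _; rewrite mulr_ge0 ?step_prob_ge0.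
Qed.

Lemma sum_walk_dist g w k : \sum_y walk_dist e g w k y = 1.
Proof.
elim: k => [|k IH] /=.
  by rewrite (bigD1 w) //= eqxx big1 ?addr0 // => y /negPf ->.
by rewrite exchange_big /= -IH; apply: eq_bigr => x _; rewrite -mulr_sumr sum_step_prob mulr1.
Qed.

Lemma walk_dist_prob g w k : 0 <= g <= 1 -> prob_dist (walk_dist e g w k).
Proof. by move=> g01; split=> [y|]; [exact: walk_dist_ge0 | exact: sum_walk_dist]. Qed.

Lemma walk_dist_stochastic g k : 0 <= g <= 1 -> stochastic (fun x => walk_dist e g x k).
Proof. by move=> g01 x; apply: walk_dist_prob. Qed.

Definition walk_evolution g (s : nat -> T -> R) :=
  forall k y, s k.+1 y = \sum_x s k x * step_prob e g x y.

Lemma walk_dist_evolution g w : walk_evolution g (walk_dist e g w).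
Proof. by []. Qed.

Lemma walk_evolutionB g s1 s2 : walk_evolution g s1 -> walk_evolution g s2 ->
  walk_evolution g (fun k x => s1 k x - s2 k x).
Proof.
by move=> h1 h2 k y; rewrite h1 h2 -sumrB; apply: eq_bigr => x _; rewrite mulrBl.
Qed.

Lemma walk_evolutionD g s k K y : walk_evolution g s ->
  s (k + K)%N y = \sum_x s k x * walk_dist e g x K y.
Proof.
move=> hs; elim: K y => [|K IH] y.
  rewrite addn0 /= (bigD1 y) //= eqxx mulr1 big1 ?addr0 // => x /negPf.
  by rewrite eq_sym => ->; rewrite mulr0.
rewrite addnS hs /=; under eq_bigr do rewrite IH mulr_suml.
rewrite exchange_big /=; apply: eq_bigr => x _; rewrite mulr_sumr.
by apply: eq_bigr => z _; rewrite mulrA.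
Qed.

Definition cvg_l1 (s m : nat -> T -> R) := forall eps, 0 < eps ->
  exists N, forall k, (N <= k)%N -> \sum_x `|s k x - m k x| <= eps.

(* The L1 distance of the two solutions never increases and shrinks by the
   factor 1 - d every K steps. *)
Lemma cvg_l1_doeblin g s m K d (C : nat -> pred T) : 0 <= g <= 1 ->
  walk_evolution g s -> walk_evolution g m ->
  (forall k, \sum_x s k x = \sum_x m k x) ->
  (forall k x, ~~ C k x -> s k x = m k x) ->
  0 < d <= 1 -> (forall k x y, C k x -> C k y -> d <= walk_dist e g x K y) ->
  cvg_l1 s m.
Proof.
move=> g01 hs hm hsum hC /andP[d0 d1] hd eps eps0.
pose f k x := s k x - m k x.
have ef : walk_evolution g f := walk_evolutionB hs hm.
pose D k := \sum_x `|f k x|.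
have D_step k : D k.+1 <= D k.
  rewrite /D; under eq_bigr do rewrite ef.
  exact/l1_stochastic_contract/step_prob_stochastic.
have D_mono n k : (n <= k)%N -> D k <= D n.
  move=> /subnK <-; elim: (k - n)%N => [|i IH]; rewrite ?add0n // addSn.
  exact: le_trans (D_step _) IH.
have D_K k : D (k + K)%N <= (1 - d) * D k.
  rewrite /D; under eq_bigr do rewrite (walk_evolutionD _ _ _ ef).
  apply: (l1_doeblin_contract (C := C k)); first exact: walk_dist_stochastic.
  - exact: hd.
  - by move=> x nCx; rewrite /f hC ?subrr.
  - by rewrite /f sumrB hsum subrr.
have D_jK j : D (j * K)%N <= (1 - d) ^+ j * D 0%N.
  elim: j => [|j IH]; first by rewrite mul0n expr0 mul1r.
  rewrite mulSn addnC; apply: (le_trans (D_K _)).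
  by rewrite exprS -mulrA ler_wpM2l // subr_ge0.
have [j hj] : exists j : nat, (1 - d) ^+ j * D 0%N <= eps.
  apply: exists_expr_mul_le => //; last by apply: sumr_ge0 => x _.
  by rewrite subr_ge0 d1 ltrBlDr ltrDl.
exists (j * K)%N => k hk.
exact: le_trans (D_mono _ _ hk) (le_trans (D_jK j) hj).
Qed.

End WalkKernel.

Section ExactLengthWalks.
Variables (T : finType) (e : rel T).

Fixpoint nwalk (k : nat) (x y : T) : bool :=
  if k is k'.+1 then [exists z, nwalk k' x z && e z y] else x == y.

Lemma nwalkD j k x y : nwalk (j + k) x y = [exists z, nwalk j x z && nwalk k z y].
Proof.
elim: k y => [|k IH] y.
  rewrite addn0; apply/idP/existsP => [h|[z /andP[h /eqP <-]]] //.
  by exists y; rewrite h /= eqxx.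
rewrite addnS /=; apply/existsP/existsP.
  case=> z /andP[+ ezy]; rewrite IH => /existsP[w /andP[hw hwz]].
  by exists w; rewrite hw /=; apply/existsP; exists z; rewrite hwz ezy.
case=> w /andP[hw /existsP[z /andP[hwz ezy]]]; exists z; rewrite ezy andbT IH.
by apply/existsP; exists w; rewrite hw hwz.
Qed.

Lemma nwalk_trans j k x y z : nwalk j x y -> nwalk k y z -> nwalk (j + k) x z.
Proof. by move=> hj hk; rewrite nwalkD; apply/existsP; exists y; rewrite hj hk. Qed.

Lemma nwalk1 x y : nwalk 1 x y = e x y.
Proof. by apply/existsP/idP => [[z /andP[/eqP-> //]]|h]; exists x; rewrite eqxx. Qed.

Lemma nwalkSl k x y : nwalk k.+1 x y = [exists z, e x z && nwalk k z y].
Proof. by rewrite -add1n nwalkD; apply: eq_existsb => z; rewrite nwalk1. Qed.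

Lemma path_nwalk p x : path e x p -> nwalk (size p) x (last x p).
Proof.
elim: p x => [|z p IH] x; first by rewrite /= eqxx.
by case/andP=> exz hp; rewrite nwalkSl; apply/existsP; exists z; rewrite exz IH.
Qed.

Hypothesis e_sym : symmetric e.

Lemma nwalk_sym k x y : nwalk k x y = nwalk k y x.
Proof.
elim: k x y => [|k IH] x y; first by rewrite /= eq_sym.
by rewrite nwalkSl; apply: eq_existsb => z; rewrite IH e_sym andbC.
Qed.

Hypothesis e_conn : forall x y : T, connect e x y.

Lemma exists_nwalk x y : exists k, nwalk k x y.
Proof. by have /connectP[p hp ->] := e_conn x y; exists (size p); apply: path_nwalk. Qed.

(* Some walk length, not necessarily the graph distance. *)
Definition walk_len x y : nat := xchoose (exists_nwalk x y).

Lemma walk_lenP x y : nwalk (walk_len x y) x y.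
Proof. exact: (xchooseP (exists_nwalk x y)). Qed.

Definition walk_len_max : nat := \max_(p : T * T) walk_len p.1 p.2.

Lemma walk_len_le x y : (walk_len x y <= walk_len_max)%N.
Proof. exact: (leq_bigmax (F := fun p : T * T => walk_len p.1 p.2) (x, y)). Qed.

Lemma connected_has_nbr x y : x != y -> exists z, e x z.
Proof.
move=> nxy; have := walk_lenP x y; case: (walk_len x y) => [/eqP xy|k].
  by rewrite xy eqxx in nxy.
by rewrite nwalkSl => /existsP[z /andP[exz _]]; exists z.
Qed.

Lemma connected_deg_neq0 (x0 y0 : T) : x0 != y0 -> forall x, deg e x != 0%N.
Proof.
move=> x0y0 x; have [z exz] : exists z, e x z.
  by have [->|xx0] := eqVneq x x0; [apply: connected_has_nbr x0y0 | apply: connected_has_nbr xx0].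
by rewrite -lt0n; apply/card_gt0P; exists z; rewrite inE.
Qed.

Hypothesis has_nbr : forall x, exists z, e x z.

Lemma nwalkSS k x y : nwalk k x y -> nwalk k.+2 x y.
Proof.
have [z eyz] := has_nbr y; rewrite -addn2 => h; apply: (nwalk_trans h).
by rewrite nwalkSl; apply/existsP; exists z; rewrite eyz nwalk1 e_sym.
Qed.

Lemma nwalk_parity_leq n K x y : nwalk n x y -> (n <= K)%N -> odd n = odd K ->
  nwalk K x y.
Proof.
move=> h nK hodd; have even_diff : odd (K - n) = false by rewrite oddB // hodd addbb.
have -> : K = (n + (K - n)./2.*2)%N.
  by have := odd_double_half (K - n); rewrite even_diff /=; lia.
by elim: (K - n)./2 => [|i IH]; rewrite ?addn0 // doubleS !addnS nwalkSS.
Qed.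

Definition odd_closed_walk := exists z k, odd k && nwalk k z z.

(* Pad a walk x ~> z ~> y through an odd closed walk at z to fix its parity. *)
Lemma odd_closed_walk_nwalk : odd_closed_walk -> exists K, forall x y, nwalk K x y.
Proof.
case=> z [L /andP[oL hL]]; exists (2 * walk_len_max + L)%N => x y.
have lxz := walk_len_le x z; have lzy := walk_len_le z y.
have hxzy := nwalk_trans (walk_lenP x z) (walk_lenP z y).
have hxzzy := nwalk_trans (nwalk_trans (walk_lenP x z) hL) (walk_lenP z y).
have [hp|hp] := eqVneq (odd (walk_len x z + walk_len z y)) (odd (2 * walk_len_max + L)).
  by apply: (nwalk_parity_leq hxzy) => //; lia.
apply: (nwalk_parity_leq hxzzy); first lia.
by move: hp; rewrite !oddD oL; do 3 case: odd.
Qed.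

Variable u : T.

Definition side x := odd (walk_len u x).

Lemma nwalk_side k x y : ~ odd_closed_walk -> nwalk k x y -> odd k = side x (+) side y.
Proof.
move=> no h.
have hc : nwalk (walk_len u x + k + walk_len u y) u u.
  by apply: nwalk_trans (nwalk_trans (walk_lenP u x) h) _; rewrite nwalk_sym walk_lenP.
have : ~~ odd (walk_len u x + k + walk_len u y).
  by apply/negP => ho; apply: no; exists u, (walk_len u x + k + walk_len u y)%N; rewrite ho.
by rewrite /side !oddD; do 3 case: odd.
Qed.

Lemma side_edge x y : ~ odd_closed_walk -> e x y -> side y = ~~ side x.
Proof. by move=> no; rewrite -nwalk1 => /(nwalk_side no) /=; do 2 case: side. Qed.

Lemma nwalk_same_side x y : side x = side y -> nwalk (2 * walk_len_max) x y.
Proof.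
move=> hs; have h : nwalk (walk_len u x + walk_len u y) x y.
  by apply: nwalk_trans (walk_lenP u y); rewrite nwalk_sym walk_lenP.
apply: (nwalk_parity_leq h).
  by have := walk_len_le u x; have := walk_len_le u y; lia.
by rewrite oddD -/(side x) -/(side y) hs addbb oddM.
Qed.

End ExactLengthWalks.

Section WalkPositivity.
Variables (R : realType) (T : finType) (e : rel T).
Hypotheses (e_irr : irreflexive e) (deg_neq0 : forall x, deg e x != 0%N).
Implicit Types (g : R) (w x y : T).

Lemma step_prob_diag g x : step_prob e g x x = g.
Proof. by rewrite /step_prob eqxx (negPf (deg_neq0 x)). Qed.

Lemma step_prob_edge g x y : e x y -> step_prob e g x y = (1 - g) / (deg e x)%:R.
Proof. by move=> exy; rewrite /step_prob exy; case: eqVneq exy => // ->; rewrite e_irr. Qed.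

Lemma walk_dist_ge_step g w k x y : 0 <= g <= 1 ->
  walk_dist e g w k x * step_prob e g x y <= walk_dist e g w k.+1 y.
Proof.
by move=> g01 /=; apply: ler_sum_term => z; rewrite mulr_ge0 ?walk_dist_ge0 ?step_prob_ge0.
Qed.

Lemma walk_dist_gt0 g w k y : 0 <= g < 1 -> nwalk e k w y -> 0 < walk_dist e g w k y.
Proof.
move=> /andP[g0 g1]; have g01 : 0 <= g <= 1 by rewrite g0 ltW.
elim: k y => [y /eqP <-|k IH y /existsP[z /andP[hz ezy]]]; first by rewrite /= eqxx.
apply: (lt_le_trans _ (walk_dist_ge_step w k z y g01)).
rewrite mulr_gt0 ?IH // step_prob_edge // divr_gt0 ?subr_gt0 //.
by rewrite ltr0n lt0n deg_neq0.
Qed.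

Lemma walk_dist_lazy_gt0 g w j k y : 0 < g <= 1 -> (j <= k)%N ->
  0 < walk_dist e g w j y -> 0 < walk_dist e g w k y.
Proof.
move=> /andP[g0 g1] /subnK <-; elim: (k - j)%N => [|i IH] h; rewrite ?add0n //.
apply: (lt_le_trans _ (walk_dist_ge_step w _ y y _)); last by rewrite ltW.
by rewrite step_prob_diag mulr_gt0 ?IH.
Qed.

Lemma walk_dist0_eq0 w k y : ~~ nwalk e k w y -> walk_dist e (0 : R) w k y = 0.
Proof.
elim: k y => [|k IH] y /=; first by rewrite eq_sym => /negPf ->.
move=> hn; apply: big1 => z _; have [hz|hz] := boolP (nwalk e k w z); last first.
  by rewrite IH // mul0r.
have [<-|nzy] := eqVneq z y; first by rewrite step_prob_diag mulr0.
rewrite /step_prob (negPf nzy); case: ifP => [ezy|_]; last by rewrite mulr0.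
by case/existsP: hn; exists z; rewrite hz ezy.
Qed.

End WalkPositivity.

Section Stationary.
Variables (R : realType) (T : finType) (e : rel T).
Hypotheses (e_sym : symmetric e) (e_irr : irreflexive e).
Hypothesis deg_neq0 : forall x, deg e x != 0%N.
Variable t0 : T.
Implicit Types (g : R) (x y : T).

Local Notation degR x := ((deg e x)%:R : R).

Definition vol : R := \sum_x degR x.

Definition stat_dist x : R := degR x / vol.

Lemma sum_edge_const (c : R) y : \sum_x (if e x y then c else 0) = c * degR y.
Proof.
rewrite -big_mkcond /= sumr_const -[_ *+ _]mulr_natr /deg /nbrs.
by congr (_ * _%:R); apply: eq_card => x; rewrite inE e_sym.
Qed.

Lemma sum_step_prob_into g (F : T -> R) y :
  \sum_x F x * step_prob e g x y =
  F y * g + \sum_x (if e x y then F x * ((1 - g) / degR x) else 0).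
Proof.
rewrite (bigD1 y) //= step_prob_diag // [in RHS](bigD1 y) //= e_irr add0r.
congr (_ + _); apply: eq_bigr => x nxy; case: ifP => [exy|nexy].
  by rewrite step_prob_edge.
by rewrite /step_prob (negPf nxy) nexy mulr0.
Qed.

Lemma vol_gt0 : 0 < vol.
Proof.
apply: lt_le_trans (ler_sum_term t0 (fun x => ler0n _ _)).
by rewrite ltr0n lt0n deg_neq0.
Qed.

Lemma stat_dist_ge x : vol^-1 <= stat_dist x.
Proof.
rewrite -[X in X <= _]mul1r ler_wpM2r ?invr_ge0 ?(ltW vol_gt0) //.
by rewrite ler1n lt0n deg_neq0.
Qed.

Lemma stat_dist_ge0 x : 0 <= stat_dist x.
Proof. by apply: le_trans (stat_dist_ge x); rewrite invr_ge0 ltW ?vol_gt0. Qed.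

Lemma sum_stat_dist : \sum_x stat_dist x = 1.
Proof. by rewrite -mulr_suml divff // gt_eqF ?vol_gt0. Qed.

Lemma stat_dist_stationary g : walk_evolution e g (fun=> stat_dist).
Proof.
move=> _ y; have vol_neq0 : vol != 0 by rewrite gt_eqF ?vol_gt0.
rewrite sum_step_prob_into.
rewrite (eq_bigr (fun x => if e x y then (1 - g) / vol else 0)); last first.
  move=> x _; case: ifP => // _; rewrite /stat_dist; field.
  by rewrite vol_neq0 pnatr_eq0 deg_neq0.
by rewrite sum_edge_const /stat_dist; field.
Qed.

Variable side : T -> bool.
Hypothesis side_edge : forall x y, e x y -> side y = ~~ side x.

Lemma sum_nbrs_on_side b y :
  \sum_(x | side x == b) (if e y x then 1 else 0) = if side y == b then 0 else degR y.
Proof.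
under eq_bigr do rewrite e_sym.
have nbr_side x : e x y -> (side x == b) = (side y != b).
  by move=> /side_edge ->; case: (side x); case: b.
have [hy|hy] := eqVneq (side y) b.
  apply: big1 => x hx; case: ifP => // exy.
  by have := nbr_side x exy; rewrite hx hy eqxx.
rewrite -(mul1r (degR y)) -sum_edge_const big_mkcond /=; apply: eq_bigr => x _.
case: ifP => // hx; case: ifP => // exy.
by rewrite nbr_side // hy in hx.
Qed.

(* Every edge has exactly one endpoint on each side, so each side carries
   half of the total degree. *)
Lemma sum_side_deg b : \sum_(x | side x == b) degR x = vol / 2.
Proof.
have swap : \sum_(x | side x == b) degR x = \sum_(x | side x != b) degR x.
  under eq_bigr do rewrite -(mul1r (degR _)) -sum_edge_const.
  rewrite exchange_big /= (bigID (fun y => side y == b)) /=.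
  rewrite big1 ?add0r => [|y hy]; last by rewrite sum_nbrs_on_side hy.
  by apply: eq_bigr => y hy; rewrite sum_nbrs_on_side (negPf hy).
have : vol = 2 * \sum_(x | side x == b) degR x.
  by rewrite /vol (bigID (fun x => side x == b)) /= -swap -mulr2n mulr_natl.
by move=> ->; rewrite [2 * _]mulrC mulfK ?pnatr_eq0.
Qed.

Lemma sum_stat_dist_off_side b : \sum_(x | side x != b) stat_dist x = 2^-1.
Proof.
rewrite -mulr_suml (eq_bigl (fun x => side x == ~~ b)) ?sum_side_deg.
  by rewrite mulrAC mulfV ?mul1r // gt_eqF ?vol_gt0.
by move=> x; case: (side x); case: b.
Qed.

Definition side_dist (b : bool) x : R := if side x == b then 2 * stat_dist x else 0.

Lemma side_dist_ge0 b x : 0 <= side_dist b x.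
Proof. by rewrite /side_dist; case: ifP => // _; rewrite mulr_ge0 ?stat_dist_ge0. Qed.

Lemma side_dist_zero_or_ge b : zero_or_ge vol^-1 (side_dist b).
Proof.
move=> x; rewrite /side_dist; case: ifP => _; [right | by left].
by apply: le_trans (stat_dist_ge x) _; rewrite ler_peMl ?stat_dist_ge0 ?ler1n.
Qed.

Lemma sum_side_dist b : \sum_x side_dist b x = 1.
Proof.
rewrite /side_dist -big_mkcond /= -mulr_sumr -mulr_suml sum_side_deg.
by field; rewrite gt_eqF ?vol_gt0.
Qed.

(* With laziness 0 the walk switches sides at every step. *)
Lemma side_dist_evolution c : walk_evolution e 0 (fun k => side_dist (c (+) odd k)).
Proof.
move=> k y; rewrite sum_step_prob_into mulr0 add0r subr0.
have -> : side_dist (c (+) odd k.+1) y =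
          (if side y == c (+) odd k.+1 then 2 / vol else 0) * degR y.
  by rewrite /side_dist /stat_dist; case: ifP; rewrite ?mul0r // mulrAC mulrA.
rewrite -sum_edge_const; apply: eq_bigr => x _; case: ifP => // exy.
rewrite /side_dist (side_edge exy) oddS.
have -> : (~~ side x == c (+) ~~ odd k) = (side x == c (+) odd k).
  by case: (side x); case: c; case: (odd k).
case: ifP; rewrite ?mul0r // => _; rewrite /stat_dist; field.
by rewrite pnatr_eq0 deg_neq0 gt_eqF ?vol_gt0.
Qed.

End Stationary.

Section Wasserstein.
Variables (R : realType) (T : finType) (e : rel T).
Hypothesis e_irr : irreflexive e.
Implicit Types (mu nu m n : T -> R) (p q : T -> T -> R).

Lemma gdist_self a : gdist e a a = 0%N.
Proof.
rewrite /gdist; have : (0 < #|T|)%N by apply/card_gt0P; exists a.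
by case: #|T| => // n _ /=; rewrite inE eqxx.
Qed.

Lemma gdist_ge1 a b : a != b -> (1 <= gdist e a b)%N.
Proof.
move=> nab; rewrite /gdist; have : (0 < #|T|)%N by apply/card_gt0P; exists a.
by case: #|T| => // n _ /=; rewrite inE eq_sym (negPf nab).
Qed.

Lemma gdist_le_card a b : (gdist e a b <= #|T|)%N.
Proof. by rewrite /gdist (leq_trans (find_size _ _)) ?size_iota. Qed.

Lemma gdist_edge a b : e a b -> gdist e a b = 1%N.
Proof.
move=> eab; have nab : a != b by apply: contraTneq eab => ->; rewrite e_irr.
apply/anti_leq; rewrite gdist_ge1 // andbT /gdist.
have : (1 < #|T|)%N by apply/card_gt1P; exists a, b.
case: #|T| => [|[|n]] // _ /=; case: ifP => // _.
by rewrite big_set1 in_setU1 inE eab orbT.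
Qed.

Lemma plan_cost_ge0 mu nu p : is_plan mu nu p -> 0 <= plan_cost e p.
Proof.
by case=> p0 _ _; apply: sumr_ge0 => a _; apply: sumr_ge0 => b _; rewrite mulr_ge0.
Qed.

Lemma wasserstein_le_cost mu nu p : is_plan mu nu p -> wasserstein e mu nu <= plan_cost e p.
Proof.
move=> hp; apply: ge_inf; last by exists p.
by exists 0 => c [p' [hp' ->]]; exact: plan_cost_ge0 hp'.
Qed.

Lemma le_wasserstein mu nu p0 c : is_plan mu nu p0 ->
  (forall p, is_plan mu nu p -> c <= plan_cost e p) -> c <= wasserstein e mu nu.
Proof.
move=> hp0 hc; apply: lb_le_inf; first by exists (plan_cost e p0), p0.
by move=> _ [p [hp ->]]; exact: hc.
Qed.

Lemma prod_plan mu nu : prob_dist mu -> prob_dist nu ->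
  is_plan mu nu (fun a b => mu a * nu b).
Proof.
case=> mu0 mu1 [nu0 nu1]; split=> [a b|a|b]; first by rewrite mulr_ge0.
  by rewrite -mulr_sumr nu1 mulr1.
by rewrite -mulr_suml mu1 mul1r.
Qed.

Lemma wasserstein_ge0 mu nu : prob_dist mu -> prob_dist nu -> 0 <= wasserstein e mu nu.
Proof. by move=> hmu hnu; apply: (le_wasserstein (prod_plan hmu hnu)) => p /plan_cost_ge0. Qed.

Definition diag_plan m a b := if a == b then m a else 0.

Lemma diag_planP m : (forall x, 0 <= m x) -> is_plan m m (diag_plan m).
Proof.
move=> m0; split=> [a b|a|b]; rewrite /diag_plan.
- by case: ifP.
- by under eq_bigr do rewrite eq_sym; rewrite sum_if_eq.
- exact: (sum_if_eq m).
Qed.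

Lemma diag_plan_cost m : plan_cost e (diag_plan m) = 0.
Proof.
rewrite /plan_cost big1 // => a _; apply: big1 => b _; rewrite /diag_plan.
by case: eqP => [->|_]; rewrite ?gdist_self ?mul0r ?mulr0.
Qed.

Lemma plan_costD p q : plan_cost e (fun a b => p a b + q a b) = plan_cost e p + plan_cost e q.
Proof.
rewrite /plan_cost -big_split; apply: eq_bigr => a _.
by rewrite -big_split; apply: eq_bigr => b _; rewrite mulrDr.
Qed.

Lemma wasserstein_ge_mass_off mu nu (S : pred T) : prob_dist mu -> prob_dist nu ->
  (forall a, ~~ S a -> mu a = 0) -> \sum_(b | ~~ S b) nu b <= wasserstein e mu nu.
Proof.
move=> hmu hnu muS; apply: (le_wasserstein (prod_plan hmu hnu)) => p [p0 pr pc].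
have p_diag b : ~~ S b -> p b b = 0.
  move=> nb; apply/le_anti; rewrite p0 andbT -(muS _ nb) -(pr b).
  exact: ler_sum_term.
rewrite /plan_cost exchange_big (bigID (fun b => ~~ S b)) /=.
apply: le_trans (_ : _ <= _ + 0) _; first by rewrite addr0.
rewrite lerD ?sumr_ge0 // => [|b _]; last first.
  by apply: sumr_ge0 => a _; rewrite mulr_ge0.
apply: ler_sum => b nb; rewrite -pc; apply: ler_sum => a _.
have [->|nab] := eqVneq a b; first by rewrite p_diag ?mulr0.
by rewrite ler_peMl // ler1n gdist_ge1.
Qed.

(* If mu and nu dominate (1 - eps) m and (1 - eps) n, transport that part
   along a plan for m and n and the remaining mass eps independently. *)
Lemma wasserstein_perturb mu nu m n q eps : 0 < eps <= 1 ->
  prob_dist mu -> prob_dist nu -> \sum_x m x = 1 -> \sum_x n x = 1 -> is_plan m n q ->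
  (forall x, (1 - eps) * m x <= mu x) -> (forall x, (1 - eps) * n x <= nu x) ->
  wasserstein e mu nu <= plan_cost e q + #|T|%:R * eps.
Proof.
move=> /andP[e0 e1] [_ smu] [_ snu] sm sn [q0 qr qc] hmu hnu.
pose r x := mu x - (1 - eps) * m x.
pose s x := nu x - (1 - eps) * n x.
have r0 x : 0 <= r x by rewrite subr_ge0.
have s0 x : 0 <= s x by rewrite subr_ge0.
have sr : \sum_x r x = eps by rewrite sumrB smu -mulr_sumr sm; ring.
have ss : \sum_x s x = eps by rewrite sumrB snu -mulr_sumr sn; ring.
have eps_neq0 : eps != 0 by rewrite gt_eqF.
have e1_ge0 : 0 <= 1 - eps by rewrite subr_ge0.
pose p a b := (1 - eps) * q a b + r a * s b / eps.
have hp : is_plan mu nu p.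
  split=> [a b|a|b].
  - by apply: addr_ge0; [exact: mulr_ge0 | apply: divr_ge0; [exact: mulr_ge0 | exact: ltW]].
  - by rewrite big_split /= -mulr_sumr qr -mulr_suml -mulr_sumr ss /r; field.
  - by rewrite big_split /= -mulr_sumr qc -!mulr_suml sr /s; field.
apply: le_trans (wasserstein_le_cost hp) _; rewrite /plan_cost.
apply: (@le_trans _ _ (\sum_a \sum_b ((gdist e a b)%:R * q a b + #|T|%:R * (r a * s b / eps)))).
  apply: ler_sum => a _; apply: ler_sum => b _; rewrite /p mulrDr lerD //.
    by rewrite mulrCA ler_piMl ?mulr_ge0 // lerBlDr lerDl ltW.
  apply: ler_wpM2r; last by rewrite ler_nat gdist_le_card.
  by rewrite divr_ge0 ?mulr_ge0 ?r0 ?s0 ?(ltW e0).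
rewrite (eq_bigr (fun a => \sum_b (gdist e a b)%:R * q a b + #|T|%:R * r a)).
  by rewrite big_split /= -mulr_sumr sr.
move=> a _; rewrite big_split /= -mulr_sumr -mulr_suml -mulr_sumr ss.
by congr (_ + _); field.
Qed.

End Wasserstein.

Section SidePlans.
Variables (R : realType) (T : finType) (e : rel T).
Hypotheses (e_sym : symmetric e) (e_irr : irreflexive e).
Hypothesis deg_neq0 : forall x, deg e x != 0%N.
Variable t0 : T.
Variable side : T -> bool.
Hypothesis side_edge : forall x y, e x y -> side y = ~~ side x.

Local Notation vol := (vol R e).
Local Notation stat_dist := (stat_dist R e).
Local Notation side_dist := (side_dist R e side).
Local Notation degR x := ((deg e x)%:R : R).

Let vol_pos : 0 < vol := vol_gt0 R deg_neq0 t0.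

Definition edge_plan (b : bool) (c : R) (x y : T) : R :=
  if (side x == b) && e x y then c else 0.

Lemma sum_edge_plan_row b c x :
  \sum_y edge_plan b c x y = if side x == b then c * degR x else 0.
Proof.
rewrite /edge_plan; case: ifP => hx /=; last by rewrite big1.
by rewrite -(sum_edge_const e_sym); apply: eq_bigr => y _; rewrite e_sym.
Qed.

Lemma sum_edge_plan_col b c y :
  \sum_x edge_plan b c x y = if side y == b then 0 else c * degR y.
Proof.
have -> : (if side y == b then 0 else c * degR y) =
          c * (if side y == b then 0 else degR y) by case: ifP; rewrite ?mulr0.
rewrite -(sum_nbrs_on_side R e_sym side_edge) mulr_sumr /edge_plan -big_mkcond big_mkcondr /=.
by apply: eq_bigr => x _; rewrite e_sym; case: ifP; rewrite ?mulr1 ?mulr0.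
Qed.

Lemma edge_plan_cost b c : 0 <= c -> plan_cost e (edge_plan b c) <= c * (vol / 2).
Proof.
move=> c0; apply: (@le_trans _ _ (\sum_x \sum_y edge_plan b c x y)).
  apply: ler_sum => x _; apply: ler_sum => y _; rewrite /edge_plan.
  by case: ifP => [/andP[_ /gdist_edge ->]|_]; rewrite ?mul1r ?mulr0.
under eq_bigr do rewrite sum_edge_plan_row.
by rewrite -big_mkcond /= -mulr_sumr (sum_side_deg R e_sym side_edge).
Qed.

(* Half of the mass of [side_dist b] stays in place, the other half crosses an edge. *)
Definition half_plan (b : bool) (x y : T) : R :=
  diag_plan (fun z => if side z == b then stat_dist z else 0) x y + edge_plan b vol^-1 x y.

Lemma half_planP b : is_plan (side_dist b) stat_dist (half_plan b).
Proof.
pose f z := if side z == b then stat_dist z else 0.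
have f0 z : 0 <= f z by rewrite /f; case: ifP; rewrite ?(stat_dist_ge0 R deg_neq0 t0).
have [d0 drow dcol] := diag_planP f0.
split=> [x y|x|y]; rewrite /half_plan.
- by rewrite addr_ge0 // /edge_plan; case: ifP; rewrite // invr_ge0 ltW.
- rewrite big_split /= drow sum_edge_plan_row /f /side_dist /stat_dist.
  by case: ifP; rewrite ?addr0 // mulrC mulr2n mulrDl mul1r.
- rewrite big_split /= dcol sum_edge_plan_col /f.
  by case: ifP; rewrite ?addr0 ?add0r // /stat_dist mulrC.
Qed.

Lemma half_plan_cost b : plan_cost e (half_plan b) <= 2^-1.
Proof.
rewrite /half_plan plan_costD diag_plan_cost add0r.
have c0 : 0 <= vol^-1 by rewrite invr_ge0 ltW.
apply: le_trans (edge_plan_cost b c0) _.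
by rewrite mulrA mulVf ?mul1r // gt_eqF.
Qed.

Lemma cross_planP b : is_plan (side_dist b) (side_dist (~~ b)) (edge_plan b (2 / vol)).
Proof.
split=> [x y|x|y].
- by rewrite /edge_plan; case: ifP; rewrite // divr_ge0 ?ltW.
- by rewrite sum_edge_plan_row /side_dist /stat_dist; case: ifP; rewrite // mulrAC mulrA.
- rewrite sum_edge_plan_col /side_dist /stat_dist.
  by case: (side y); case: b; rewrite //= mulrAC mulrA.
Qed.

Lemma cross_plan_cost b : plan_cost e (edge_plan b (2 / vol)) <= 1.
Proof.
have c0 : 0 <= 2 / vol by rewrite divr_ge0 ?ltW.
apply: le_trans (edge_plan_cost b c0) _.
by rewrite mulrA divfK ?divff // gt_eqF.
Qed.

End SidePlans.

Lemma cvg_eps_squeeze (R : realType) (w : nat -> R) (c D : R) : 0 <= D ->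
  (forall eps, 0 < eps <= 1 -> exists N, forall k, (N <= k)%N ->
      c - eps <= w k <= c + D * eps) ->
  w @ \oo --> c.
Proof.
move=> D0 h; apply/cvgrPdist_le => r r0.
pose eps := Num.min (r / (D + 1)) 1.
have D1 : 0 < D + 1 by rewrite ltr_wpDl.
have eps01 : 0 < eps <= 1 by rewrite lt_min ltr01 divr_gt0 // ge_min lexx orbT.
have eps_r : eps * (D + 1) <= r by rewrite -ler_pdivlMr // ge_min lexx.
have [N hN] := h eps eps01; exists N => // k /= /hN /andP[lo hi].
by move: eps01 => /andP[e0 _]; rewrite ler_norml; apply/andP; split; nra.
Qed.

Section WassersteinLimit.
Variables (R : realType) (T : finType) (e : rel T).

(* An L1 bound below eps * d is a pointwise relative bound when the
   positive values of the limit are at least d. *)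
Lemma cvg_l1_minorize (s m : nat -> T -> R) d : 0 < d ->
  (forall k x, 0 <= s k x) -> (forall k, zero_or_ge d (m k)) -> cvg_l1 s m ->
  forall eps, 0 < eps -> exists N, forall k, (N <= k)%N ->
    forall x, (1 - eps) * m k x <= s k x.
Proof.
move=> d0 s0 md hc eps e0; have [N hN] := hc (eps * d) (mulr_gt0 e0 d0).
exists N => k /hN hk x; have := ler_sum_term x (fun x => normr_ge0 (s k x - m k x)).
move=> /le_trans /(_ hk); have [->|mkx] := md k x; first by rewrite mulr0.
rewrite distrC => /(le_trans (ler_norm _)) hx.
by have := ler_wpM2l (ltW e0) mkx; nra.
Qed.

Lemma wasserstein_cvg (mu nu m n : nat -> T -> R) (q : nat -> T -> T -> R) d c :
  0 < d -> (forall k, prob_dist (mu k)) -> (forall k, prob_dist (nu k)) ->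
  (forall k, prob_dist (m k)) -> (forall k, prob_dist (n k)) ->
  (forall k, zero_or_ge d (m k)) -> (forall k, zero_or_ge d (n k)) ->
  cvg_l1 mu m -> cvg_l1 nu n ->
  (forall k, is_plan (m k) (n k) (q k) /\ plan_cost e (q k) <= c) ->
  (forall eps, 0 < eps -> exists N, forall k, (N <= k)%N ->
      c - eps <= wasserstein e (mu k) (nu k)) ->
  (fun k => wasserstein e (mu k) (nu k)) @ \oo --> c.
Proof.
move=> d0 hmu hnu hm hn md nd cm cn hq lo.
apply: (cvg_eps_squeeze (ler0n _ #|T|)) => eps /[dup] eps01 /andP[e0 e1].
have [N1 h1] := cvg_l1_minorize d0 (fun k => (hmu k).1) md cm e0.
have [N2 h2] := cvg_l1_minorize d0 (fun k => (hnu k).1) nd cn e0.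
have [N3 h3] := lo eps e0.
exists (maxn N1 (maxn N2 N3)) => k; rewrite !geq_max => /and3P[k1 k2 k3].
rewrite h3 //=; have [hqk cqk] := hq k.
apply: le_trans (wasserstein_perturb e eps01 (hmu k) (hnu k) (hm k).2 (hn k).2 hqk
  (h1 k k1) (h2 k k2)) _.
by rewrite lerD2r.
Qed.

End WassersteinLimit.

Section WalkLimits.
Variables (R : realType) (T : finType) (e : rel T).
Hypotheses (e_sym : symmetric e) (e_irr : irreflexive e).
Hypothesis e_conn : forall x y : T, connect e x y.
Hypothesis deg_neq0 : forall x, deg e x != 0%N.
Variable u : T.

Local Notation vol := (vol R e).
Local Notation stat_dist := (stat_dist R e).
Local Notation side := (side e_conn u).
Local Notation side_dist := (side_dist R e side).

Let has_nbr x : exists z, e x z.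
Proof.
have /card_gt0P[z] : (0 < deg e x)%N by rewrite lt0n deg_neq0.
by rewrite inE; exists z.
Qed.

Lemma cvg_l1_stat (g : R) w : 0 <= g < 1 -> 0 < g \/ odd_closed_walk e ->
  cvg_l1 (walk_dist e g w) (fun=> stat_dist).
Proof.
move=> /andP[g0 g1] hg; have g01 : 0 <= g <= 1 by rewrite g0 ltW.
have [K hK] : exists K, forall x y, 0 < walk_dist e g x K y.
  case: hg => [gpos|/(odd_closed_walk_nwalk e_sym e_conn has_nbr)[K hK]].
    exists (walk_len_max e_conn) => x y.
    apply: (walk_dist_lazy_gt0 deg_neq0 _ (walk_len_le e_conn x y)).
      by rewrite gpos ltW.
    by apply: walk_dist_gt0 => //; [rewrite g0 | exact: walk_lenP].
  by exists K => x y; apply: walk_dist_gt0; rewrite ?g0.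
have [d d01 hd] := finite_pos_lower_bound (P := predT)
  (F := fun p : T * T => walk_dist e g p.1 K p.2) (fun p _ => hK p.1 p.2).
apply: (cvg_l1_doeblin e_irr (C := fun=> predT) g01 (walk_dist_evolution e g w)
  (stat_dist_stationary e_sym e_irr deg_neq0 u g) _ _ d01) => // [k|k x y _ _].
  by rewrite sum_walk_dist // (sum_stat_dist R deg_neq0 u).
exact: (hd (x, y)).
Qed.

Lemma walk_dist0_off_side w k x : ~ odd_closed_walk e ->
  side x != side w (+) odd k -> walk_dist e (0 : R) w k x = 0.
Proof.
move=> no hx; apply: walk_dist0_eq0 => //; apply: contra hx.
by move=> /(nwalk_side e_sym e_conn u no) ->; do 2 case: side.
Qed.

Lemma cvg_l1_side w : ~ odd_closed_walk e ->
  cvg_l1 (walk_dist e 0 w) (fun k => side_dist (side w (+) odd k)).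
Proof.
move=> no; have side_e := side_edge e_sym e_conn u no.
pose K := (2 * walk_len_max e_conn)%N.
have pos (p : T * T) : side p.1 == side p.2 -> 0 < walk_dist e (0 : R) p.1 K p.2.
  move=> /eqP hs; apply: walk_dist_gt0; rewrite ?lexx ?ltr01 //.
  exact: (nwalk_same_side e_sym has_nbr hs).
have [d d01 hd] := finite_pos_lower_bound pos.
have g01 : (0 : R) <= 0 <= (1 : R) by rewrite lexx ler01.
apply: (cvg_l1_doeblin e_irr (C := fun k x => side x == side w (+) odd k) g01
  (walk_dist_evolution e 0 w) (side_dist_evolution R e_sym e_irr deg_neq0 u side_e _)
  _ _ d01) => [k|k x hx|k x y /eqP hx /eqP hy].
- by rewrite sum_walk_dist // (sum_side_dist R e_sym deg_neq0 u side_e).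
- by rewrite /side_dist (negPf hx) walk_dist0_off_side.
- by apply: (hd (x, y)); rewrite /= hx hy.
Qed.

Variables (v : T) (alpha beta : R).
Hypotheses (alpha_ge0 : 0 <= alpha) (alpha_le_beta : alpha <= beta) (beta_lt1 : beta < 1).

Local Notation mu := (walk_dist e alpha u).
Local Notation nu := (walk_dist e beta v).

Let alpha01 : 0 <= alpha <= 1.
Proof. by rewrite alpha_ge0 (le_trans alpha_le_beta (ltW beta_lt1)). Qed.

Let beta01 : 0 <= beta <= 1.
Proof. by rewrite (le_trans alpha_ge0 alpha_le_beta) (ltW beta_lt1). Qed.

Let mu_prob k : prob_dist (mu k) := walk_dist_prob e_irr u k alpha01.
Let nu_prob k : prob_dist (nu k) := walk_dist_prob e_irr v k beta01.

Let vol_inv_gt0 : 0 < vol^-1.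
Proof. by rewrite invr_gt0 (vol_gt0 R deg_neq0 u). Qed.

Let stat_prob : prob_dist stat_dist.
Proof. by split; [exact: stat_dist_ge0 | exact: sum_stat_dist]. Qed.

Let stat_zero_or_ge : zero_or_ge vol^-1 stat_dist.
Proof. by move=> x; right; exact: stat_dist_ge. Qed.

Lemma Wk_cvg0_common_limit (m : nat -> T -> R) :
  (forall k, prob_dist (m k)) -> (forall k, zero_or_ge vol^-1 (m k)) ->
  cvg_l1 mu m -> cvg_l1 nu m -> Wk e u v alpha beta @ \oo --> 0.
Proof.
move=> hm m_ge cm cn; apply: (wasserstein_cvg (q := fun k => diag_plan (m k))
  vol_inv_gt0 mu_prob nu_prob hm hm m_ge m_ge cm cn).
  by move=> k; rewrite diag_plan_cost; split; [exact: diag_planP (hm k).1 | ].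
move=> eps e0; exists 0%N => k _; rewrite sub0r.
by rewrite (le_trans _ (wasserstein_ge0 _ (mu_prob k) (nu_prob k))) // oppr_le0 ltW.
Qed.

Let side_dist_prob b : ~ odd_closed_walk e -> prob_dist (side_dist b).
Proof.
move=> no; have side_e := side_edge e_sym e_conn u no.
by split; [exact: side_dist_ge0 | exact: sum_side_dist].
Qed.

Lemma Wk_cvg0_mixing : 0 < alpha \/ odd_closed_walk e -> Wk e u v alpha beta @ \oo --> 0.
Proof.
move=> h; apply: (Wk_cvg0_common_limit (m := fun=> stat_dist)) => //.
  by apply: cvg_l1_stat => //; rewrite alpha_ge0 (le_lt_trans alpha_le_beta).
apply: cvg_l1_stat; first by rewrite (le_trans alpha_ge0).
by case: h => [a0|]; [left; exact: lt_le_trans alpha_le_beta | right].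
Qed.

Lemma Wk_cvg0_same_side : alpha = 0 -> beta = 0 -> ~ odd_closed_walk e ->
  side v = side u -> Wk e u v alpha beta @ \oo --> 0.
Proof.
move=> a0 b0 no hv; apply: (Wk_cvg0_common_limit (m := fun k => side_dist (side u (+) odd k))).
- by move=> k; apply: side_dist_prob.
- by move=> k; apply: side_dist_zero_or_ge.
- by rewrite a0; apply: cvg_l1_side.
- by rewrite b0 -hv; apply: cvg_l1_side.
Qed.

Lemma Wk_cvg_half : alpha = 0 -> 0 < beta -> ~ odd_closed_walk e ->
  Wk e u v alpha beta @ \oo --> (2^-1 : R).
Proof.
move=> a0 b0 no; have side_e := side_edge e_sym e_conn u no.
pose b k := side u (+) odd k.
have cnu : cvg_l1 nu (fun=> stat_dist) by apply: cvg_l1_stat; [rewrite (ltW b0) | left].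
apply: (wasserstein_cvg (m := fun k => side_dist (b k)) (n := fun=> stat_dist)
  (q := fun k => half_plan R e side (b k))
  vol_inv_gt0 mu_prob nu_prob _ (fun=> stat_prob) _ (fun=> stat_zero_or_ge) _ cnu).
- by move=> k; apply: side_dist_prob.
- by move=> k; apply: side_dist_zero_or_ge.
- by rewrite a0; apply: cvg_l1_side.
- by move=> k; split; [apply: half_planP | apply: half_plan_cost].
move=> eps e0; have [N hN] := cvg_l1_minorize vol_inv_gt0 (fun k => (nu_prob k).1)
  (fun=> stat_zero_or_ge) cnu e0.
exists N => k /hN hk.
have supp x : ~~ (side x == b k) -> mu k x = 0 by rewrite a0; apply: walk_dist0_off_side.
apply: le_trans (wasserstein_ge_mass_off _ (mu_prob k) (nu_prob k) supp).
apply: (@le_trans _ _ (\sum_(x | side x != b k) (1 - eps) * stat_dist x)).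
  by rewrite -mulr_sumr (sum_stat_dist_off_side R e_sym deg_neq0 u side_e); lra.
by apply: ler_sum => x _; exact: hk.
Qed.

Lemma Wk_cvg1_opposite_side : alpha = 0 -> beta = 0 -> ~ odd_closed_walk e ->
  side v = ~~ side u -> Wk e u v alpha beta @ \oo --> (1 : R).
Proof.
move=> a0 b0 no hv; have side_e := side_edge e_sym e_conn u no.
pose b k := side u (+) odd k.
have nu_off_side k x : side x == b k -> nu k x = 0.
  move=> /eqP hx; rewrite b0 walk_dist0_off_side // hx hv /b.
  by case: (side u); case: (odd k).
apply: (wasserstein_cvg (m := fun k => side_dist (b k)) (n := fun k => side_dist (~~ b k))
  (q := fun k => edge_plan e side (b k) (2 / vol)) vol_inv_gt0 mu_prob nu_prob).
- by move=> k; apply: side_dist_prob.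
- by move=> k; apply: side_dist_prob.
- by move=> k; apply: side_dist_zero_or_ge.
- by move=> k; apply: side_dist_zero_or_ge.
- by rewrite a0; apply: cvg_l1_side.
- move=> eps e0; have [N hN] := cvg_l1_side v no e0.
  by exists N => k /hN; rewrite b0 hv addNb.
- by move=> k; split; [apply: cross_planP | apply: cross_plan_cost].
move=> eps e0; exists 0%N => k _.
have supp x : ~~ (side x == b k) -> mu k x = 0 by rewrite a0; apply: walk_dist0_off_side.
apply: le_trans (wasserstein_ge_mass_off _ (mu_prob k) (nu_prob k) supp).
have <- : \sum_x nu k x = \sum_(x | side x != b k) nu k x.
  by rewrite (bigID (fun x => side x == b k)) /= big1 ?add0r // => x /nu_off_side.
by rewrite (nu_prob k).2 lerBlDr lerDl ltW.
Qed.

End WalkLimits.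

Lemma Wk_cvg0_one_vertex (R : realType) (T : finType) (e : rel T) (u v : T) (alpha beta : R) :
  irreflexive e -> 0 <= alpha <= 1 -> 0 <= beta <= 1 -> (forall x, x = u) ->
  Wk e u v alpha beta @ \oo --> 0.
Proof.
move=> e_irr alpha01 beta01 one.
have mass1 (f : T -> R) x : \sum_y f y = 1 -> f x = 1.
  by move=> <-; rewrite (big_pred1 x) // => y; rewrite /= [y]one [x]one eqxx.
have W0 k : Wk e u v alpha beta k = 0.
  have [mu0 mu1] := walk_dist_prob e_irr u k alpha01.
  have [nu0 nu1] := walk_dist_prob e_irr v k beta01.
  rewrite /Wk; have -> : walk_dist e beta v k = walk_dist e alpha u k.
    by apply/funext => x; rewrite (mass1 _ x nu1) (mass1 _ x mu1).
  apply/le_anti; rewrite wasserstein_ge0 ?andbT //.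
  by rewrite (le_trans (wasserstein_le_cost _ (diag_planP mu0))) ?diag_plan_cost.
by rewrite (funext W0); exact: cvg_cst.
Qed.

Lemma Wk_cvg_cases (R : realType) (T : finType) (e : rel T)
    (e_sym : symmetric e) (e_irr : irreflexive e) (e_conn : forall x y : T, connect e x y)
    (u v : T) (alpha beta : R) :
  0 <= alpha -> alpha <= beta -> beta < 1 ->
  [\/ Wk e u v alpha beta @ \oo --> (1 : R), Wk e u v alpha beta @ \oo --> (2^-1 : R)
    | Wk e u v alpha beta @ \oo --> (0 : R)].
Proof.
move=> alpha_ge0 alpha_le_beta beta_lt1.
have [x0 x0u|one] := pickP (fun x => x != u); last first.
  have all_u x : x = u by apply/eqP/negbFE/one.
  apply: Or33; apply: (Wk_cvg0_one_vertex v e_irr _ _ all_u).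
    by rewrite alpha_ge0 (le_trans alpha_le_beta (ltW beta_lt1)).
  by rewrite (le_trans alpha_ge0 alpha_le_beta) (ltW beta_lt1).
have deg_neq0 := connected_deg_neq0 e_conn x0u.
have mixing := Wk_cvg0_mixing e_sym e_irr e_conn deg_neq0 u v alpha_ge0 alpha_le_beta beta_lt1.
have [odd|no] := pselect (odd_closed_walk e); first by apply: Or33; apply: mixing; right.
have [alpha_gt0|alpha_le0] := ltrP 0 alpha; first by apply: Or33; apply: mixing; left.
have alpha0 : alpha = 0 by apply/le_anti; rewrite alpha_le0.
have [beta_gt0|beta_le0] := ltrP 0 beta.
  by apply: Or32; apply: Wk_cvg_half.
have beta0 : beta = 0 by apply/le_anti; rewrite beta_le0 (le_trans alpha_ge0).
have [hv|hv] := boolP (side e_conn u v == side e_conn u u).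
  by apply: Or33; apply: Wk_cvg0_same_side => //; apply/eqP.
by apply: Or31; apply: Wk_cvg1_opposite_side => //; move: hv; do 2 case: side.
Qed.

Theorem corollary3p12 (R : realType) (T : finType) (e : rel T)
    (e_sym : symmetric e) (e_irr : irreflexive e)
    (e_conn : forall x y : T, connect e x y)
    (u v : T) (alpha beta : R)
    (h0a : 0 <= alpha) (hab : alpha <= beta) (hb1 : beta <= 1) :
  let C1 := (Wk e u v alpha beta @ \oo --> (1 : R)) /\ beta < 1 in
  let C2 := (Wk e u v alpha beta @ \oo --> (2^-1 : R)) /\ beta < 1 in
  let C3 := (Wk e u v alpha beta @ \oo --> (0 : R)) /\ beta < 1 in
  let C4 := beta = 1 in
  (C1 \/ C2 \/ C3 \/ C4) /\
  ~ (C1 /\ C2) /\ ~ (C1 /\ C3) /\ ~ (C1 /\ C4) /\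
  ~ (C2 /\ C3) /\ ~ (C2 /\ C4) /\ ~ (C3 /\ C4).
Proof.
move=> C1 C2 C3 C4.
have lim_neq (a b : R) : a != b -> ~ (((Wk e u v alpha beta @ \oo --> a) /\ beta < 1) /\
    ((Wk e u v alpha beta @ \oo --> b) /\ beta < 1)).
  by move=> /eqP ab [[ha _] [hb _]]; apply: ab; exact: cvg_unique ha hb.
have not_lt1 (P : Prop) : ~ ((P /\ beta < 1) /\ beta = 1).
  by case=> [[_ lt1] b1]; rewrite b1 ltxx in lt1.
split.
  have [beta1|beta_neq1] := eqVneq beta 1; first by do 3 right.
  have beta_lt1 : beta < 1 by rewrite lt_neqAle beta_neq1.
  by case: (Wk_cvg_cases e_sym e_irr e_conn u v h0a hab beta_lt1) => h;
    [left | right; left | right; right; left].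
by do ![split]; try apply: not_lt1; apply: lim_neq; lra.
Qed.
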